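(* Let $R>0$ and let $\mathbf L\colon\mathbb R^n\times\mathbb R^m\to\mathbb R$ be an $R$-smooth convex-concave function with a saddle point $\mathbf z^\star$. Let $\alpha_0\in(0,\frac{3}{4R})$ and define $$\alpha_{k+1}=\alpha_k\left(1-\frac{1}{(k+1)(k+3)}\,\frac{\alpha_k^2R^2}{1-\alpha_k^2R^2}\right),\qquad k\ge0,$$ and $\alpha_\infty=\lim_{k\to\infty}\alpha_k$. Let $\mathbf z^0\in\mathbb R^n\times\mathbb R^m$ and define the EAG-V iterates $$\mathbf z^{k+1/2}=\mathbf z^k+\tfrac{1}{k+2}(\mathbf z^0-\mathbf z^k)-\alpha_k\mathbf G(\mathbf z^k),\qquad \mathbf z^{k+1}=\mathbf z^k+\tfrac{1}{k+2}(\mathbf z^0-\mathbf z^k)-\alpha_k\mathbf G(\mathbf z^{k+1/2}),\quad k\ge0.$$ Then for all $k\ge0$, $$\|\nabla\mathbf L(\mathbf z^k)\|^2\le\frac{4(1+\alpha_0\alpha_\infty R^2)}{\alpha_\infty^2}\,\frac{\|\mathbf z^0-\mathbf z^\star\|^2}{(k+1)(k+2)}.$$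
   Context: Write $\mathbf z=(\mathbf x,\mathbf y)$. $\mathbf L$ convex-concave: convex in $\mathbf x$ for fixed $\mathbf y$, concave in $\mathbf y$ for fixed $\mathbf x$. A saddle point $(\mathbf x^\star,\mathbf y^\star)$ satisfies $\mathbf L(\mathbf x^\star,\mathbf y)\le\mathbf L(\mathbf x^\star,\mathbf y^\star)\le\mathbf L(\mathbf x,\mathbf y^\star)$ for all $\mathbf x,\mathbf y$. $\mathbf G(\mathbf z)=(\nabla_{\mathbf x}\mathbf L(\mathbf x,\mathbf y),-\nabla_{\mathbf y}\mathbf L(\mathbf x,\mathbf y))$; $\mathbf L$ is $R$-smooth if it is differentiable and $\mathbf G$ is $R$-Lipschitz. $\|\nabla\mathbf L\|=\|\mathbf G\|$. *)

From HB Require Import structures.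
From mathcomp Require Import all_boot all_order all_algebra.
From mathcomp Require Import all_classical all_reals all_analysis.
Set Implicit Arguments. Unset Strict Implicit. Unset Printing Implicit Defensive.
Import Order.TTheory GRing.Theory Num.Theory.
Import numFieldNormedType.Exports.
Local Open Scope ring_scope.

Section Defs.
Variable R : realType.

Definition sqnormv (n : nat) (v : 'rV[R]_n) : R := \sum_(i < n) (v 0 i) ^+ 2.

Definition sqnormz (n m : nat) (z : 'rV[R]_n * 'rV[R]_m) : R :=
  sqnormv z.1 + sqnormv z.2.
Definition enormz (n m : nat) (z : 'rV[R]_n * 'rV[R]_m) : R := Num.sqrt (sqnormz z).

Definition grad (n : nat) (f : 'rV[R]_n -> R) (x : 'rV[R]_n) : 'rV[R]_n :=
  \row_(i < n) derive f x (delta_mx 0 i).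

Definition saddleG (n m : nat) (L : 'rV[R]_n * 'rV[R]_m -> R)
  (z : 'rV[R]_n * 'rV[R]_m) : 'rV[R]_n * 'rV[R]_m :=
  (grad (fun x => L (x, z.2)) z.1, - grad (fun y => L (z.1, y)) z.2).

Definition convex_in (n : nat) (f : 'rV[R]_n -> R) : Prop :=
  forall (a b : 'rV[R]_n) (t : R), 0 <= t -> t <= 1 ->
    f (t *: a + (1 - t) *: b) <= t * f a + (1 - t) * f b.

Definition convex_concave (n m : nat) (L : 'rV[R]_n * 'rV[R]_m -> R) : Prop :=
  (forall y, convex_in (fun x => L (x, y))) /\
  (forall x, convex_in (fun y => - L (x, y))).

Definition is_saddle_point (n m : nat) (L : 'rV[R]_n * 'rV[R]_m -> R)
  (zs : 'rV[R]_n * 'rV[R]_m) : Prop :=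
  forall x y, L (zs.1, y) <= L zs /\ L zs <= L (x, zs.2).

Definition smooth_cc (n m : nat) (Rs : R) (L : 'rV[R]_n * 'rV[R]_m -> R) : Prop :=
  (forall z, differentiable L z) /\
  (forall z w, enormz (saddleG L z - saddleG L w) <= Rs * enormz (z - w)).

Fixpoint alpha (Rs a0 : R) (k : nat) : R :=
  match k with
  | 0%N => a0
  | k'.+1 => let a := alpha Rs a0 k' in
      a * (1 - (((k'.+1)%:R * (k'.+3)%:R)^-1) *
                 (a ^+ 2 * Rs ^+ 2 / (1 - a ^+ 2 * Rs ^+ 2)))
  end.

Fixpoint eagv (n m : nat) (L : 'rV[R]_n * 'rV[R]_m -> R) (Rs a0 : R)
  (z0 : 'rV[R]_n * 'rV[R]_m) (k : nat) : 'rV[R]_n * 'rV[R]_m :=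
  match k with
  | 0%N => z0
  | k'.+1 =>
    let zk := eagv L Rs a0 z0 k' in
    let ak := alpha Rs a0 k' in
    let zh := zk + ((k'.+2)%:R^-1) *: (z0 - zk) - ak *: saddleG L zk in
    zk + ((k'.+2)%:R^-1) *: (z0 - zk) - ak *: saddleG L zh
  end.

End Defs.

From HB Require Import structures.
From mathcomp Require Import all_boot all_order all_algebra.
From mathcomp Require Import all_classical all_reals all_analysis.
From mathcomp Require Import lra zify ring.
Import Order.TTheory GRing.Theory Num.Theory.
Import numFieldNormedType.Exports.
Local Open Scope ring_scope.
Set Implicit Arguments. Unset Strict Implicit.

(* With K = k + 1, the potential
     V_k = alpha_k K (K + 1) / 2 |G z_k|^2 + K <G z_k, z_k - z_0>
   does not increase along EAG-V: V_k - V_(k+1) is a nonnegative combination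
   of the monotonicity of G between z_k and z_(k+1), its Lipschitz bound
   between z_(k+1/2) and z_(k+1), and |G z_(k+1/2) + t G z_(k+1)|^2 >= 0 for a
   suitable t; the recursion defining alpha_(k+1) is exactly what makes the
   coefficients match.  Since G z* = 0, V_0 <= alpha_0 R^2 |z_0 - z*|^2, and
   monotonicity at z* together with |c G z_k + K (z* - z_0)|^2 >= 0 turns
   V_k <= V_0 into the bound, because alpha_k >= alpha_inf > 0: the step sizes
   decrease by factors 1 - O(1/k^2). *)

Section OneSidedDerivative.
Variables (R : realType) (V : normedModType R).
Implicit Types (f : V -> R) (a v : V) (c : R).

Lemma derive_le_of_secant f a v c :
  derivable f a v -> (forall t, 0 < t < 1 -> f (t *: v + a) - f a <= t * c) ->
  derive f a v <= c.
Proof.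
move=> df secant; have := cvg_dnbhs_at_right df => /cvgr_to_le; apply.
near=> h.
have h_gt0 : 0 < h by near: h; exact: nbhs_right_gt.
have h_lt1 : h < 1 by near: h; exact: nbhs_right_lt.
by rewrite /= -[_ *: _]/(h^-1 * _) ler_pdivrMl // secant // h_gt0 h_lt1.
Unshelve. all: by end_near. Qed.

Lemma derive_ge_of_secant f a v c :
  derivable f a v -> (forall t, 0 < t < 1 -> t * c <= f (t *: v + a) - f a) ->
  c <= derive f a v.
Proof.
move=> df secant; rewrite -lerN2 -deriveN //.
apply: derive_le_of_secant; first exact: derivableN.
by move=> t /secant; rewrite /= -opprD mulrN lerN2.
Qed.

End OneSidedDerivative.

Section InnerProduct.
Variables (R : realType) (n : nat).
Implicit Types (u v w : 'rV[R]_n).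

Definition dotv u w : R := \sum_(i < n) u 0 i * w 0 i.

Lemma dotvC u v : dotv u v = dotv v u.
Proof. by apply: eq_bigr => i _; rewrite mulrC. Qed.

Lemma dotvDl u v w : dotv (u + v) w = dotv u w + dotv v w.
Proof. by rewrite /dotv -big_split; apply: eq_bigr => i _; rewrite mxE mulrDl. Qed.

Lemma dotvNl u w : dotv (- u) w = - dotv u w.
Proof. by rewrite /dotv -sumrN; apply: eq_bigr => i _; rewrite mxE mulNr. Qed.

Lemma dotvZl (a : R) u w : dotv (a *: u) w = a * dotv u w.
Proof. by rewrite /dotv mulr_sumr; apply: eq_bigr => i _; rewrite mxE mulrA. Qed.

Lemma dotvDr u v w : dotv w (u + v) = dotv w u + dotv w v.
Proof. by rewrite !(dotvC w) dotvDl. Qed.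

Lemma dotvNr u w : dotv w (- u) = - dotv w u.
Proof. by rewrite !(dotvC w) dotvNl. Qed.

Lemma dotv_ge0 u : 0 <= dotv u u.
Proof. by apply: sumr_ge0 => i _; rewrite -expr2 sqr_ge0. Qed.

Lemma sqnormvE u : sqnormv u = dotv u u.
Proof. by apply: eq_bigr => i _; rewrite expr2. Qed.

End InnerProduct.

Section ProductInnerProduct.
Variables (R : realType) (n m : nat).
Implicit Types (u v w : 'rV[R]_n * 'rV[R]_m).

Definition dotz u w : R := dotv u.1 w.1 + dotv u.2 w.2.

Lemma dotzC u v : dotz u v = dotz v u.
Proof. by rewrite /dotz dotvC [dotv u.2 _]dotvC. Qed.

Lemma dotzDl u v w : dotz (u + v) w = dotz u w + dotz v w.
Proof. by rewrite /dotz /= !dotvDl addrACA. Qed.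

Lemma dotzNl u w : dotz (- u) w = - dotz u w.
Proof. by rewrite /dotz /= !dotvNl opprD. Qed.

Lemma dotzZl (a : R) u w : dotz (a *: u) w = a * dotz u w.
Proof. by rewrite /dotz /= !dotvZl mulrDr. Qed.

Lemma dotzDr u v w : dotz w (u + v) = dotz w u + dotz w v.
Proof. by rewrite !(dotzC w) dotzDl. Qed.

Lemma dotzNr u w : dotz w (- u) = - dotz w u.
Proof. by rewrite !(dotzC w) dotzNl. Qed.

Lemma dotzZr (a : R) u w : dotz w (a *: u) = a * dotz w u.
Proof. by rewrite !(dotzC w) dotzZl. Qed.

Lemma dotz_ge0 u : 0 <= dotz u u.
Proof. by rewrite /dotz addr_ge0 // dotv_ge0. Qed.

Lemma sqnormzE u : sqnormz u = dotz u u.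
Proof. by rewrite /sqnormz /dotz !sqnormvE. Qed.

Lemma sqnormz_ge0 u : 0 <= sqnormz u.
Proof. by rewrite sqnormzE dotz_ge0. Qed.

Lemma sqnormzB u v : sqnormz (u - v) = sqnormz (v - u).
Proof. by rewrite -opprB !sqnormzE dotzNl dotzNr opprK. Qed.

Lemma dotz0r u : dotz u 0 = 0.
Proof. by rewrite /dotz /dotv !big1 ?addr0 // => i _; rewrite mxE mulr0. Qed.

Lemma sqnormz_le_of_enormz_le (c : R) u v :
  0 <= c -> enormz u <= c * enormz v -> sqnormz u <= c ^+ 2 * sqnormz v.
Proof.
move=> c_ge0; rewrite /enormz => le_uv.
rewrite -(sqr_sqrtr (sqnormz_ge0 u)) -(sqr_sqrtr (sqnormz_ge0 v)) -exprMn.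
by rewrite ler_pXn2r // nnegrE ?mulr_ge0 ?sqrtr_ge0.
Qed.

End ProductInnerProduct.

Notation dotzE := (dotzDl, dotzDr, dotzNl, dotzNr, dotzZl, dotzZr).

Lemma dotz_quadratic_ge0 (R : realType) n m (u v : 'rV[R]_n * 'rV[R]_m) (t s : R) :
  0 <= t ^+ 2 * dotz u u + 2 * t * s * dotz u v + s ^+ 2 * dotz v v.
Proof.
have := dotz_ge0 (t *: u + s *: v); rewrite !dotzE (dotzC v u).
by congr (0 <= _); ring.
Qed.


Section Gradient.
Variables (R : realType) (n : nat).
Implicit Types (f : 'rV[R]_n -> R) (a b : 'rV[R]_n).

Lemma derive_dotv_grad f a v :
  differentiable f a -> derive f a v = dotv (grad f a) v.
Proof.
move=> df; rewrite /dotv /grad.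
under eq_bigr => i _ do rewrite mxE deriveE //.
rewrite deriveE // [in LHS](row_sum_delta v) linear_sum /=.
by apply: eq_bigr => i _; rewrite linearZ /= mulrC.
Qed.

Lemma convex_combE a b (t : R) : t *: b + (1 - t) *: a = t *: (b - a) + a.
Proof. by rewrite scalerBl scale1r scalerBr addrCA addrC. Qed.

Lemma convex_gradient_ineq f a b :
  convex_in f -> differentiable f a -> f a + dotv (grad f a) (b - a) <= f b.
Proof.
move=> f_cvx df; rewrite -derive_dotv_grad // addrC -lerBrDr.
apply: derive_le_of_secant; first exact: diff_derivable.
move=> t /andP[t_gt0 t_lt1].
have := f_cvx b a t (ltW t_gt0) (ltW t_lt1); rewrite convex_combE; lra.
Qed.

Lemma concave_gradient_ineq f a b :
  convex_in (fun x => - f x) -> differentiable f a ->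
  f b <= f a + dotv (grad f a) (b - a).
Proof.
move=> f_ccv df; rewrite -derive_dotv_grad // addrC -lerBlDr.
apply: derive_ge_of_secant; first exact: diff_derivable.
move=> t /andP[t_gt0 t_lt1].
have := f_ccv b a t (ltW t_gt0) (ltW t_lt1); rewrite convex_combE; lra.
Qed.

Lemma grad_eq0_of_derive_ge0 f a :
  differentiable f a -> (forall v, 0 <= derive f a v) -> grad f a = 0.
Proof.
move=> df derive_ge0; apply/rowP => i; rewrite !mxE; apply/eqP.
rewrite eq_le derive_ge0 andbT.
by have := derive_ge0 (- delta_mx 0 i); rewrite !deriveE // linearN oppr_ge0.
Qed.

Lemma grad_eq0_at_min f a :
  (forall b, f a <= f b) -> differentiable f a -> grad f a = 0.
Proof.
move=> a_min df; apply: grad_eq0_of_derive_ge0 => // v.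
apply: derive_ge_of_secant; first exact: diff_derivable.
by move=> t _; rewrite mulr0 subr_ge0.
Qed.

Lemma grad_eq0_at_max f a :
  (forall b, f b <= f a) -> differentiable f a -> grad f a = 0.
Proof.
move=> a_max df; apply: grad_eq0_of_derive_ge0 => // v.
rewrite -[v]opprK deriveE // linearN /= -deriveE // oppr_ge0.
apply: derive_le_of_secant; first exact: diff_derivable.
by move=> t _; rewrite mulr0 subr_le0.
Qed.

End Gradient.

Section SaddleOperator.
Variables (R : realType) (n m : nat) (L : 'rV[R]_n * 'rV[R]_m -> R).
Hypothesis L_diff : forall z, differentiable L z.

Lemma differentiable_slice1 x y : differentiable (fun x => L (x, y)) x.
Proof. exact: (@differentiable_comp _ _ _ _ (fun x => (x, y)) L). Qed.

Lemma differentiable_slice2 x y : differentiable (fun y => L (x, y)) y.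
Proof. exact: (@differentiable_comp _ _ _ _ (fun y => (x, y)) L). Qed.

Lemma saddleG_monotone z w :
  convex_concave L -> 0 <= dotz (saddleG L z - saddleG L w) (z - w).
Proof.
move=> [L_cvx L_ccv]; case: z => x y; case: w => x' y'; rewrite /dotz /saddleG /=.
have := convex_gradient_ineq x' (L_cvx y) (differentiable_slice1 x y).
have := concave_gradient_ineq y' (L_ccv x) (differentiable_slice2 x y).
have := convex_gradient_ineq x (L_cvx y') (differentiable_slice1 x' y').
have := concave_gradient_ineq y (L_ccv x') (differentiable_slice2 x' y').
rewrite !(dotvDl, dotvDr, dotvNl, dotvNr) opprK; lra.
Qed.

Lemma saddleG_eq0_at_saddle zs : is_saddle_point L zs -> saddleG L zs = 0.
Proof.
case: zs => xs ys zs_saddle; rewrite /saddleG /=.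
rewrite grad_eq0_at_min ?grad_eq0_at_max ?oppr0 //.
- by move=> y; case: (zs_saddle xs y).
- exact: differentiable_slice2.
- by move=> x; case: (zs_saddle x ys).
- exact: differentiable_slice1.
Qed.

End SaddleOperator.

Lemma decay_bounds (R : realType) (x N : R) : 0 <= x < 3 / 4 -> 3 <= N ->
  0 <= N^-1 * (x / (1 - x)) < 3 / N.
Proof.
move=> /andP[x_ge0 x_lt] N_ge3; have N_gt0 : 0 < N by lra.
have frac_ge0 : 0 <= x / (1 - x) by rewrite divr_ge0 //; lra.
have frac_lt3 : x / (1 - x) < 3 by rewrite ltr_pdivrMr; lra.
rewrite mulr_ge0 ?invr_ge0 ?(ltW N_gt0) //=.
by rewrite [X in _ < X]mulrC ltr_pM2l ?invr_gt0.
Qed.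

Lemma telescoped_bound_step (R : realType) (j b c q : R) : 0 <= j -> 0 < b -> 0 < c ->
  (j + 4) * c <= 4 * (j + 1) * b -> 0 <= q -> q <= 3 / ((j + 2) * (j + 4)) ->
  (j + 5) * c <= 4 * (j + 2) * (b * (1 - q)).
Proof.
move=> j_ge0 b_gt0 c_gt0 ih q_ge0 q_le.
have jq : (j + 2) * (j + 4) * q <= 3.
  by rewrite mulrC -ler_pdivlMr // mulr_gt0 //; lra.
have bjq : 4 * b * ((j + 2) * (j + 4) * q) <= 4 * b * 3.
  by rewrite ler_pM2l // mulr_gt0 //; lra.
have j4_gt0 : 0 < j + 4 by lra.
rewrite -(ler_pM2l j4_gt0).
have : (j + 4) * ((j + 5) * c) <= (j + 5) * (4 * (j + 1) * b).
  by rewrite mulrCA ler_pM2l //; lra.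
nra.
Qed.

Section StepSize.
Variables (R : realType) (Rs a0 : R).
Hypotheses (Rs_gt0 : 0 < Rs) (a0_gt0 : 0 < a0) (a0_lt : a0 < 3 / (4 * Rs)).
Local Notation a := (alpha Rs a0).

Lemma alpha_sqr_lt k : 0 < a k <= a0 -> a k ^+ 2 * Rs ^+ 2 < 3 / 4.
Proof.
move=> /andP[ak_gt0 ak_le]; rewrite -exprMn.
have : a0 * Rs < 3 / 4 by move: a0_lt; rewrite ltr_pdivlMr ?mulr_gt0 //; lra.
have : a k * Rs <= a0 * Rs by rewrite ler_pM2r.
have : 0 < a k * Rs by rewrite mulr_gt0.
nra.
Qed.

Lemma step_denom_ge3 k : 3 <= (k.+1)%:R * (k.+3)%:R :> R.
Proof. by rewrite -natrM ler_nat; nia. Qed.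

Lemma alpha_step k : 0 < a k <= a0 ->
  exists2 q, a k.+1 = a k * (1 - q) & 0 <= q < 3 / ((k.+1)%:R * (k.+3)%:R).
Proof.
move=> ak_bnd; eexists; first reflexivity.
apply: decay_bounds; last exact: step_denom_ge3.
by rewrite alpha_sqr_lt // andbT mulr_ge0 ?sqr_ge0.
Qed.

Lemma alpha_bounds k : 0 < a k <= a0.
Proof.
elim: k => [|k ak_bnd]; first by rewrite a0_gt0 lexx.
have [q -> /andP[q_ge0 q_lt]] := alpha_step ak_bnd.
have N_ge3 := step_denom_ge3 k.
have q_lt1 : q < 1 by apply: (lt_le_trans q_lt); rewrite ler_pdivrMr; lra.
case/andP: ak_bnd => ak_gt0 ak_le; rewrite mulr_gt0 ?subr_gt0 //=.
by rewrite (le_trans _ ak_le) // ger_pMr // gerBl.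
Qed.

Lemma alpha_nonincreasing : nonincreasing_seq a.
Proof.
apply/nonincreasing_seqP => k.
have [q -> /andP[q_ge0 _]] := alpha_step (alpha_bounds k).
by case/andP: (alpha_bounds k) => ak_gt0 _; rewrite ger_pMr // gerBl.
Qed.

(* (k + 4) / (4 (k + 1)) is the product of the factors
   1 - 3 / ((j + 1) (j + 3)) = j (j + 4) / ((j + 1) (j + 3)) for 1 <= j <= k. *)
Lemma alpha_lower_bound k : (k.+4)%:R * a 1 <= 4 * (k.+1)%:R * a k.+1.
Proof.
elim: k => [|k ih]; first by rewrite mulr1.
have [q -> /andP[q_ge0 /ltW]] := alpha_step (alpha_bounds k.+1).
have /andP[b_gt0 _] := alpha_bounds k.+1.
have /andP[c_gt0 _] := alpha_bounds 1.
have natrDk i : (i + k)%:R = k%:R + i%:R :> R by rewrite natrD addrC.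
move: ih; rewrite -[k.+4]/(4 + k)%N -[k.+1]/(1 + k)%N -[k.+1.+4]/(5 + k)%N.
rewrite -[k.+2]/(2 + k)%N !natrDk => ih q_le; exact: telescoped_bound_step.
Qed.

Lemma alpha1_div4_le k : a 1 / 4 <= a k.
Proof.
have /andP[a1_gt0 _] := alpha_bounds 1.
case: k => [|k]; first by have := alpha_nonincreasing (leq0n 1); lra.
have /andP[ak_gt0 _] := alpha_bounds k.+1.
have k1_gt0 : 0 < (k.+1)%:R :> R by [].
have : (k.+1)%:R <= (k.+4)%:R :> R by rewrite ler_nat; lia.
have := alpha_lower_bound k.
nra.
Qed.

Lemma alpha_cvgn : cvgn a.
Proof.
apply: nonincreasing_is_cvgn; first exact: alpha_nonincreasing.
by exists 0 => _ [k _ <-]; case/andP: (alpha_bounds k) => /ltW.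
Qed.

Lemma alpha_lim_le k : limn a <= a k.
Proof. exact: nonincreasing_cvgn_ge alpha_nonincreasing alpha_cvgn k. Qed.

Lemma alpha_lim_gt0 : 0 < limn a.
Proof.
have /andP[a1_gt0 _] := alpha_bounds 1.
apply: (@lt_le_trans _ _ (a 1 / 4)); first by rewrite divr_gt0.
by apply: limr_ge; [exact: alpha_cvgn | near=> k; exact: alpha1_div4_le].
Unshelve. all: by end_near. Qed.

End StepSize.

Lemma potential_decrease_scalar (R : realType)
    (K al al' Rs aa ab bb bc cc gx gpx : R) :
  1 <= K -> 0 < al -> 0 < Rs -> al ^+ 2 * Rs ^+ 2 < 1 ->
  al' = al * (1 - (K * (K + 2))^-1 * (al ^+ 2 * Rs ^+ 2 / (1 - al ^+ 2 * Rs ^+ 2))) ->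
  0 <= (K + 1)^-1 * gx - (K + 1)^-1 * gpx - al * bc + al * ab ->
  cc - 2 * bc + bb <= al ^+ 2 * Rs ^+ 2 * (aa - 2 * ab + bb) ->
  (forall t, 0 <= bb + 2 * t * bc + t ^+ 2 * cc) ->
  al' * ((K + 1) * (K + 2)) / 2 * cc + (K + 1) * ((1 - (K + 1)^-1) * gpx - al * bc)
  <= al * (K * (K + 1)) / 2 * aa + K * gx.
Proof.
move=> K_ge1 al_gt0 Rs_gt0 r_lt1 al'E mono lip quad.
set r := al ^+ 2 * Rs ^+ 2 in r_lt1 al'E lip.
have r_gt0 : 0 < r by rewrite /r mulr_gt0 // exprn_gt0.
(* Multipliers of the three hypotheses, and the point t of the quadratic, for
   which the goal is exactly their combination. *)
set p := K * (K + 1).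
set lam := p / (2 * al * Rs ^+ 2).
set nu := lam * (1 - r).
set t := (lam - (K + 1) ^+ 2 * al / 2) / (lam * (r - 1)).
have p_gt0 : 0 < p by rewrite /p mulr_gt0 //; lra.
have lam_gt0 : 0 < lam by rewrite /lam divr_gt0 // !mulr_gt0 // exprn_gt0.
have nu_ge0 : 0 <= nu by rewrite /nu mulr_ge0 //; lra.
have E : al * (K * (K + 1)) / 2 * aa + K * gx -
  (al' * ((K + 1) * (K + 2)) / 2 * cc + (K + 1) * ((1 - (K + 1)^-1) * gpx - al * bc))
  = p * ((K + 1)^-1 * gx - (K + 1)^-1 * gpx - al * bc + al * ab)
    + lam * (r * (aa - 2 * ab + bb) - (cc - 2 * bc + bb))
    + nu * (bb + 2 * t * bc + t ^+ 2 * cc).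
  rewrite al'E /t /nu /lam /p /r; field.
  have : (al * Rs) ^+ 2 < 1 by rewrite exprMn.
  by move=> ?; repeat (apply/andP; split); apply/negP => /eqP ?; lra.
rewrite -subr_ge0 {}E; apply: addr_ge0; first apply: addr_ge0.
- exact: mulr_ge0 (ltW p_gt0) mono.
- by apply: mulr_ge0 (ltW lam_gt0) _; rewrite subr_ge0.
- exact: mulr_ge0 nu_ge0 (quad t).
Qed.

Lemma potential_decrease (R : realType) n m (K al al' Rs : R)
    (z z0 G0 Gh G1 : 'rV[R]_n * 'rV[R]_m) :
  1 <= K -> 0 < al -> 0 < Rs -> al ^+ 2 * Rs ^+ 2 < 1 ->
  al' = al * (1 - (K * (K + 2))^-1 * (al ^+ 2 * Rs ^+ 2 / (1 - al ^+ 2 * Rs ^+ 2))) ->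
  0 <= dotz (G1 - G0) ((K + 1)^-1 *: (z0 - z) - al *: Gh) ->
  sqnormz (G1 - Gh) <= Rs ^+ 2 * sqnormz (al *: (G0 - Gh)) ->
  al' * ((K + 1) * (K + 2)) / 2 * sqnormz G1
    + (K + 1) * dotz G1 (z + (K + 1)^-1 *: (z0 - z) - al *: Gh - z0)
  <= al * (K * (K + 1)) / 2 * sqnormz G0 + K * dotz G0 (z - z0).
Proof.
move=> K_ge1 al_gt0 Rs_gt0 r_lt1 al'E mono lip.
have quad t := dotz_quadratic_ge0 Gh G1 1 t.
move: mono lip quad; rewrite !sqnormzE !dotzE (dotzC G1 Gh) (dotzC Gh G0).
move=> mono lip quad.
have := @potential_decrease_scalar _ K al al' Rs (dotz G0 G0) (dotz G0 Gh)
  (dotz Gh Gh) (dotz Gh G1) (dotz G1 G1) (dotz G0 z - dotz G0 z0)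
  (dotz G1 z - dotz G1 z0) K_ge1 al_gt0 Rs_gt0 r_lt1 al'E.
have quad' t : 0 <= dotz Gh Gh + 2 * t * dotz Gh G1 + t ^+ 2 * dotz G1 G1.
  by have := quad t; rewrite expr1n mul1r mulr1.
move=> /(_ ltac:(lra) ltac:(lra) quad'); lra.
Qed.

Lemma sqnorm_bound_of_potential (R : realType) (K ainf al a0 Rs g s w D2 : R) :
  1 <= K -> 0 < ainf -> ainf <= al -> 0 <= g -> 0 <= D2 -> 0 <= a0 ->
  al * (K * (K + 1)) / 2 * g + K * s <= a0 * Rs ^+ 2 * D2 ->
  w <= s ->
  (forall c, 0 <= c ^+ 2 * g + 2 * c * K * w + K ^+ 2 * D2) ->
  g <= 4 * (1 + a0 * ainf * Rs ^+ 2) / ainf ^+ 2 * (D2 / (K * (K + 1))).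
Proof.
move=> K_ge1 ainf_gt0 ainf_le g_ge0 D2_ge0 a0_ge0 potential w_le quad.
set M := a0 * Rs ^+ 2 * D2.
set c := ainf * (K * (K + 1)) / 2.
have p_gt0 : 0 < K * (K + 1) by rewrite mulr_gt0 //; lra.
have c_gt0 : 0 < c by rewrite /c divr_gt0 // mulr_gt0.
have cgKw : c * g + K * w <= M.
  apply: le_trans potential.
  have : c * g <= al * (K * (K + 1)) / 2 * g.
    by rewrite ler_wpM2r // ler_pM2r ?invr_gt0 // ?ler_pM2r.
  have : K * w <= K * s by rewrite ler_pM2l //; lra.
  lra.
(* At c, the cross term of the quadratic is the one bounded by cgKw. *)
have c2g : c ^+ 2 * g <= 2 * c * M + K ^+ 2 * D2.
  have : 2 * c * (c * g + K * w) <= 2 * c * M by rewrite ler_pM2l // mulr_gt0.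
  have -> : 2 * c * (c * g + K * w) = 2 * (c ^+ 2 * g) + 2 * c * K * w by ring.
  by have := quad c; lra.
set T := 4 * (1 + a0 * ainf * Rs ^+ 2) / ainf ^+ 2 * (D2 / (K * (K + 1))).
have Tc2 : T * c ^+ 2 = 2 * c * M + K ^+ 2 * D2 + K * D2.
  rewrite /T /c /M; field.
  by repeat (apply/andP; split); apply/negP => /eqP ?; lra.
rewrite -(ler_pM2l (exprn_gt0 2 c_gt0)) [_ * T]mulrC Tc2 (le_trans c2g) //.
by rewrite lerDl mulr_ge0 //; lra.
Qed.

Section EAGV.
Variables (R : realType) (n m : nat) (L : 'rV[R]_n * 'rV[R]_m -> R).
Variables (Rs a0 : R) (z0 : 'rV[R]_n * 'rV[R]_m).
Hypotheses (Rs_gt0 : 0 < Rs) (a0_gt0 : 0 < a0) (a0_lt : a0 < 3 / (4 * Rs)).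
Hypotheses (L_diff : forall z, differentiable L z) (L_cc : convex_concave L).
Hypothesis G_lip :
  forall u w, sqnormz (saddleG L u - saddleG L w) <= Rs ^+ 2 * sqnormz (u - w).
Local Notation G := (saddleG L).
Local Notation z := (eagv L Rs a0 z0).
Local Notation a := (alpha Rs a0).

Definition eagv_potential k : R :=
  a k * ((k.+1)%:R * (k.+2)%:R) / 2 * sqnormz (G (z k))
  + (k.+1)%:R * dotz (G (z k)) (z k - z0).

Lemma eagv_potential_nonincreasing : nonincreasing_seq eagv_potential.
Proof.
apply/nonincreasing_seqP => k; rewrite /eagv_potential.
set zh := z k + (k.+2)%:R^-1 *: (z0 - z k) - a k *: G (z k).
have zS : z k.+1 = z k + (k.+2)%:R^-1 *: (z0 - z k) - a k *: G zh by [].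
have aS : a k.+1 = a k * (1 - ((k.+1)%:R * (k.+3)%:R)^-1 *
    (a k ^+ 2 * Rs ^+ 2 / (1 - a k ^+ 2 * Rs ^+ 2))) by [].
have mono := saddleG_monotone L_diff (z k.+1) (z k) L_cc.
have lip := G_lip (z k.+1) zh.
have dz1 : z k.+1 - z k = (k.+2)%:R^-1 *: (z0 - z k) - a k *: G zh.
  by rewrite zS addrAC (addrAC (z k)) subrr add0r.
have dzh : z k.+1 - zh = a k *: (G (z k) - G zh).
  by rewrite zS opprB addrC subrKA -scalerBr.
rewrite dz1 zS in mono; rewrite dzh zS in lip.
have /andP[ak_gt0 _] := alpha_bounds Rs_gt0 a0_gt0 a0_lt k.
have r_lt := alpha_sqr_lt Rs_gt0 a0_lt (alpha_bounds Rs_gt0 a0_gt0 a0_lt k).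
have k2E : (k.+2)%:R = (k.+1)%:R + 1 :> R by rewrite natr1.
have k3E : (k.+3)%:R = (k.+1)%:R + 2 :> R by rewrite -natrD addn2.
rewrite zS aS k2E k3E; rewrite k2E in mono lip.
apply: (potential_decrease _ ak_gt0 Rs_gt0 _ _ mono lip) => //.
- by rewrite ler1n.
- lra.
Qed.

Variable zs : 'rV[R]_n * 'rV[R]_m.
Hypothesis G_zs : G zs = 0.

Lemma eagv_potential0_le : eagv_potential 0 <= a0 * Rs ^+ 2 * sqnormz (z0 - zs).
Proof.
rewrite /eagv_potential /= subrr dotz0r mulr0 addr0 mul1r mulfK ?pnatr_eq0 //.
by rewrite -mulrA ler_pM2l //; have := G_lip z0 zs; rewrite G_zs subr0.
Qed.

Lemma eagv_sqnorm_saddleG_le k :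
  sqnormz (G (z k)) <= 4 * (1 + a0 * limn a * Rs ^+ 2) / limn a ^+ 2 *
    (sqnormz (z0 - zs) / ((k.+1)%:R * (k.+2)%:R)).
Proof.
have potential_le : eagv_potential k <= a0 * Rs ^+ 2 * sqnormz (z0 - zs).
  exact: le_trans (eagv_potential_nonincreasing (leq0n k)) eagv_potential0_le.
have k2E : (k.+2)%:R = (k.+1)%:R + 1 :> R by rewrite natr1.
rewrite /eagv_potential k2E in potential_le *.
have w_le : dotz (G (z k)) (zs - z0) <= dotz (G (z k)) (z k - z0).
  have := saddleG_monotone L_diff (z k) zs L_cc.
  by rewrite G_zs subr0 !dotzE => ?; lra.
apply: (sqnorm_bound_of_potential _ _ _ _ _ _ potential_le w_le).
- by rewrite ler1n.
- exact: alpha_lim_gt0.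
- exact: alpha_lim_le.
- exact: sqnormz_ge0.
- exact: sqnormz_ge0.
- exact: ltW.
- move=> c; have := dotz_quadratic_ge0 (G (z k)) (zs - z0) c (k.+1)%:R.
  by rewrite -!sqnormzE (sqnormzB zs).
Qed.

End EAGV.

Theorem theorem2 (R : realType) (n m : nat) (Rs : R)
  (L : 'rV[R]_n * 'rV[R]_m -> R) (zs z0 : 'rV[R]_n * 'rV[R]_m) (a0 : R) :
  0 < Rs ->
  smooth_cc Rs L ->
  convex_concave L ->
  is_saddle_point L zs ->
  0 < a0 -> a0 < 3 / (4 * Rs) ->
  let ainf := limn (alpha Rs a0) in
  forall k : nat,
    sqnormz (saddleG L (eagv L Rs a0 z0 k)) <=
      4 * (1 + a0 * ainf * Rs ^+ 2) / ainf ^+ 2 *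
      (sqnormz (z0 - zs) / ((k.+1)%:R * (k.+2)%:R)).
Proof.
move=> Rs_gt0 [L_diff L_lip] L_cc zs_saddle a0_gt0 a0_lt ainf k.
have G_lip u w : sqnormz (saddleG L u - saddleG L w) <= Rs ^+ 2 * sqnormz (u - w).
  exact: sqnormz_le_of_enormz_le (ltW Rs_gt0) (L_lip u w).
exact (eagv_sqnorm_saddleG_le z0 Rs_gt0 a0_gt0 a0_lt L_diff L_cc G_lip
  (saddleG_eq0_at_saddle L_diff zs_saddle) k).
Qed.
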